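(* Let $n\in\mathbb N$ and let $K\subset\mathbb R^n$ with $\mathrm{Outrad}(K)\le1$. Then \[ \mathrm{diam}(K^{cc})\le\sqrt{\frac{2n}{n+1}}\,\mathrm{diam}(K). \]
   Context: $B(x,r)$ is the closed Euclidean ball. For $A\subseteq\mathbb R^n$, $A^c=\bigcap_{x\in A}B(x,1)$ and $A^{cc}=(A^c)^c$ (the $c$-hull of $A$). $\mathrm{Outrad}(A)$ is the infimum of $R\ge0$ with $A\subseteq B(z,R)$ for some $z$; $\mathrm{diam}(A)=\sup\{\|x-y\|_2:x,y\in A\}$. *)

From HB Require Import structures.
From mathcomp Require Import all_boot all_order all_algebra.
From mathcomp Require Import all_classical all_reals ereal.
Set Implicit Arguments. Unset Strict Implicit. Unset Printing Implicit Defensive.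
Import Order.TTheory GRing.Theory Num.Theory.
Local Open Scope ring_scope.
Local Open Scope classical_set_scope.

Definition enorm {R : realType} {n : nat} (x : 'rV[R]_n) : R :=
  Num.sqrt (\sum_(i < n) x 0 i ^+ 2).

Definition cball {R : realType} {n : nat} (z : 'rV[R]_n) (r : R) : set 'rV[R]_n :=
  [set x | enorm (x - z) <= r].

Definition cdual {R : realType} {n : nat} (A : set 'rV[R]_n) : set 'rV[R]_n :=
  [set y | forall x, A x -> cball x 1 y].

(* c-hull A^cc *)
Definition chull {R : realType} {n : nat} (A : set 'rV[R]_n) : set 'rV[R]_n :=
  cdual (cdual A).

(* Outrad(A) = inf { R >= 0 | exists z, A ⊆ B(z,R) }, in extended reals
   (+oo if A is unbounded) *)
Definition Outrad {R : realType} {n : nat} (A : set 'rV[R]_n) : \bar R :=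
  ereal_inf ((fun r : R => r%:E) @`
    [set r : R | 0 <= r /\ exists z, A `<=` cball z r]).

(* diam(A) = sup { |x - y| : x, y in A }, in extended reals
   (-oo for the empty set) *)
Definition diam {R : realType} {n : nat} (A : set 'rV[R]_n) : \bar R :=
  ereal_sup [set (enorm (x - y))%:E | x in A & y in A].

(* Jung's theorem, via the dual of the minimal enclosing ball.  For points
   [p i], maximise the variance [\sum_i l_i |p_i|^2 - |\sum_i l_i p_i|^2] over
   the simplex of weights [l].  At a maximiser with barycentre [c] every [p_i]
   lies within [sqrt V] of [c], with equality on the support of [l], and the
   parallel axis identity shows that any ball [B(z, sqrt r)] containing the
   points has [r >= V + |c - z|^2].  An affine dependence among more than
   [n + 1] support points lets one move weight until the support has at most
   [n + 1] points; averaging [|p_i - p_j|^2 <= D^2] over it then gives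
   [2 (n + 1) V <= n D^2].
   For [K] with outradius at most [1], the values [V] of the finite subsets of
   [K] are bounded by [1]; by the inequality above their centres converge, and
   the supremum [r^2] together with the limit [z] give [K] inside [B(z, r)] with
   the same bound.  Since [r <= 1], the ball [B(z, r)] is an intersection of
   unit balls, so it contains [K^cc], whence
   [diam K^cc <= 2 r <= sqrt (2n / (n + 1)) diam K]. *)

From HB Require Import structures.
From mathcomp Require Import all_boot all_order all_algebra.
From mathcomp Require Import all_classical all_reals ereal.
From mathcomp Require Import topology normedtype derive.
From mathcomp Require Import ring lra.
Import Order.TTheory GRing.Theory Num.Theory.
Import numFieldNormedType.Exports.
Local Open Scope ring_scope.
Local Open Scope classical_set_scope.

Section Euclidean.
Context {R : realType} {n : nat}.
Implicit Types (x y z : 'rV[R]_n) (a : R).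

Definition dot x y : R := \sum_j x 0 j * y 0 j.
Definition sqnorm x : R := dot x x.

Lemma dotC x y : dot x y = dot y x.
Proof. by apply: eq_bigr => j _; rewrite mulrC. Qed.

Lemma dotDl x y z : dot (x + y) z = dot x z + dot y z.
Proof. by rewrite /dot -big_split; apply: eq_bigr => j _; rewrite mxE mulrDl. Qed.

Lemma dotZl a x y : dot (a *: x) y = a * dot x y.
Proof. by rewrite /dot mulr_sumr; apply: eq_bigr => j _; rewrite mxE mulrA. Qed.

Lemma dotNl x y : dot (- x) y = - dot x y.
Proof. by rewrite -scaleN1r dotZl mulN1r. Qed.

Lemma dotBl x y z : dot (x - y) z = dot x z - dot y z.
Proof. by rewrite dotDl dotNl. Qed.

Lemma dotBr x y z : dot z (x - y) = dot z x - dot z y.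
Proof. by rewrite dotC dotBl !(dotC z). Qed.

Lemma dotZr a x y : dot y (a *: x) = a * dot y x.
Proof. by rewrite dotC dotZl dotC. Qed.

Lemma dot0l x : dot 0 x = 0.
Proof. by rewrite /dot big1 // => j _; rewrite mxE mul0r. Qed.

Lemma dot0r x : dot x 0 = 0.
Proof. by rewrite dotC dot0l. Qed.

Lemma dot_suml (I : Type) (r : seq I) (P : pred I) (F : I -> 'rV[R]_n) y :
  dot (\sum_(i <- r | P i) F i) y = \sum_(i <- r | P i) dot (F i) y.
Proof. exact: (big_morph (fun x => dot x y) (fun u v => dotDl u v y) (dot0l y)). Qed.

Lemma sqnorm_ge0 x : 0 <= sqnorm x.
Proof. by apply: sumr_ge0 => j _; rewrite -expr2 sqr_ge0. Qed.

Lemma sqnormD x y : sqnorm (x + y) = sqnorm x + 2 * dot x y + sqnorm y.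
Proof. by rewrite /sqnorm !dotDl !(dotC _ (x + y)) !dotDl (dotC x y); ring. Qed.

Lemma sqnormB x y : sqnorm (x - y) = sqnorm x - 2 * dot x y + sqnorm y.
Proof. by rewrite /sqnorm !dotBl !dotBr (dotC y x); ring. Qed.

Lemma sqnormZ a x : sqnorm (a *: x) = a ^+ 2 * sqnorm x.
Proof. by rewrite /sqnorm dotZl dotZr mulrA -expr2. Qed.

Lemma sqnormN x : sqnorm (- x) = sqnorm x.
Proof. by rewrite -scaleN1r sqnormZ sqrrN expr1n mul1r. Qed.

Lemma sqnormBC x y : sqnorm (x - y) = sqnorm (y - x).
Proof. by rewrite -sqnormN opprB. Qed.

Lemma sqnorm0 : sqnorm 0 = 0.
Proof. exact: dot0l. Qed.

Lemma sqr_coord_le_sqnorm x j : x 0 j ^+ 2 <= sqnorm x.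
Proof.
rewrite /sqnorm /dot (bigD1 j) //= -expr2 lerDl.
by apply: sumr_ge0 => i _; rewrite -expr2 sqr_ge0.
Qed.

Lemma sqnorm_eq0 x : (sqnorm x == 0) = (x == 0).
Proof.
apply/eqP/eqP => [x0|->]; last exact: sqnorm0.
apply/rowP => j; rewrite mxE; apply/eqP; rewrite -sqrf_eq0 eq_le sqr_ge0 andbT.
by rewrite -x0 sqr_coord_le_sqnorm.
Qed.

Lemma sqnorm_le_coord x d : (forall j, `|x 0 j| <= d) -> sqnorm x <= n%:R * d ^+ 2.
Proof.
move=> xd; rewrite -[n in n%:R]card_ord mulr_natl -sumr_const /sqnorm /dot.
apply: ler_sum => j _; rewrite -expr2 -real_normK ?num_real //.
by rewrite ler_sqr ?nnegrE ?(le_trans _ (xd j)).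
Qed.

Lemma enormE x : enorm x = Num.sqrt (sqnorm x).
Proof. by congr Num.sqrt; apply: eq_bigr => j _; rewrite expr2. Qed.

Lemma enorm_ge0 x : 0 <= enorm x.
Proof. by rewrite enormE sqrtr_ge0. Qed.

Lemma sqr_enorm x : enorm x ^+ 2 = sqnorm x.
Proof. by rewrite enormE sqr_sqrtr // sqnorm_ge0. Qed.

Lemma enorm_le x r : 0 <= r -> (enorm x <= r) = (sqnorm x <= r ^+ 2).
Proof. by move=> r0; rewrite -sqr_enorm ler_sqr ?nnegrE ?enorm_ge0. Qed.

Lemma enorm0 : enorm (0 : 'rV[R]_n) = 0.
Proof. by rewrite enormE sqnorm0 sqrtr0. Qed.

Lemma enorm_gt0 x : (0 < enorm x) = (x != 0).
Proof. by rewrite enormE sqrtr_gt0 lt_def sqnorm_ge0 sqnorm_eq0 andbT. Qed.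

Lemma enormBC x y : enorm (x - y) = enorm (y - x).
Proof. by rewrite !enormE sqnormBC. Qed.

Lemma enormZ a x : enorm (a *: x) = `|a| * enorm x.
Proof. by rewrite !enormE sqnormZ sqrtrM ?sqr_ge0 // sqrtr_sqr. Qed.

Lemma enormN x : enorm (- x) = enorm x.
Proof. by rewrite -scaleN1r enormZ normrN normr1 mul1r. Qed.

Lemma dot_le_enorm x y : dot x y <= enorm x * enorm y.
Proof.
have [->|x0] := eqVneq x 0; first by rewrite dot0l enorm0 mul0r.
have [->|y0] := eqVneq y 0; first by rewrite dot0r enorm0 mulr0.
set a := enorm x; set b := enorm y.
have ab_pos : 0 < a * b by rewrite mulr_gt0 ?enorm_gt0.
(* 0 <= |b x - a y|^2 = 2 a b (a b - dot x y) *)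
have := sqnorm_ge0 (b *: x - a *: y).
rewrite sqnormB !sqnormZ dotZl dotZr -!sqr_enorm -/a -/b => h.
by rewrite -subr_ge0 -(pmulr_rge0 _ ab_pos); nra.
Qed.

Lemma enormD_le x y : enorm (x + y) <= enorm x + enorm y.
Proof.
rewrite enorm_le ?addr_ge0 ?enorm_ge0 // sqnormD -!sqr_enorm.
by have := dot_le_enorm x y; lra.
Qed.

Lemma enormB_le x y z : enorm (x - z) <= enorm (x - y) + enorm (y - z).
Proof. by have := enormD_le (x - y) (y - z); rewrite addrA subrK. Qed.

End Euclidean.

Lemma row_sum_eq0_gt0 {R : realDomainType} {k} {u : 'rV[R]_k} :
  u != 0 -> \sum_i u 0 i = 0 -> exists i, 0 < u 0 i.
Proof.
move=> u0 u_sum; apply: contrapT => nopos; move/eqP: u0; apply; apply/rowP => i.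
have u_le0 j : 0 <= - u 0 j.
  by rewrite oppr_ge0 leNgt; apply/negP => ?; apply: nopos; exists j.
have sum_opp : \sum_j - u 0 j = 0 by rewrite sumrN u_sum oppr0.
have /(_ i isT)/eqP := psumr_eq0P (fun j _ => u_le0 j) sum_opp.
by rewrite oppr_eq0 mxE => /eqP.
Qed.

Section AffineRelation.
Context {R : realType} {n : nat}.

Lemma affine_relation {k} (q : 'I_k -> 'rV[R]_n) : (n.+1 < k)%N ->
  exists2 u : 'rV[R]_k, u != 0 & \sum_i u 0 i = 0 /\ \sum_i u 0 i *: q i = 0.
Proof.
move=> nk; pose M := row_mx (const_mx 1 : 'M[R]_(k, 1)) (\matrix_i q i).
have /rowV0Pn[u /sub_kermxP uM u0] : kermx M != 0.
  rewrite -mxrank_eq0 mxrank_ker -lt0n subn_gt0.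
  by apply: leq_ltn_trans (rank_leq_col M) _; rewrite add1n.
exists u => //; move: uM; rewrite mul_mx_row => /eqP; rewrite row_mx_eq0.
case/andP => /eqP/rowP/(_ 0) u1 /eqP uq; split.
  move: u1; rewrite !mxE => u1; apply: etrans _ u1.
  by apply: eq_bigr => i _; rewrite mxE mulr1.
by apply: etrans _ uq; rewrite mulmx_sum_row; apply: eq_bigr => i _; rewrite rowK.
Qed.

End AffineRelation.

Section WeightedPoints.
Context {R : realType} {n m : nat}.
Variable p : 'I_m -> 'rV[R]_n.
Implicit Types (l mu : 'rV[R]_m) (a t : R).

Definition simplex : set 'rV[R]_m :=
  [set l | (forall i, 0 <= l 0 i) /\ \sum_i l 0 i = 1].

Definition barycenter l : 'rV[R]_n := \sum_i l 0 i *: p i.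
Definition moment2 l : R := \sum_i l 0 i * sqnorm (p i).
Definition variance l : R := moment2 l - sqnorm (barycenter l).

Lemma barycenterD l mu : barycenter (l + mu) = barycenter l + barycenter mu.
Proof. by rewrite -big_split; apply: eq_bigr => i _; rewrite mxE scalerDl. Qed.

Lemma barycenterZ a l : barycenter (a *: l) = a *: barycenter l.
Proof. by rewrite scaler_sumr; apply: eq_bigr => i _; rewrite mxE scalerA. Qed.

Lemma moment2D l mu : moment2 (l + mu) = moment2 l + moment2 mu.
Proof. by rewrite -big_split; apply: eq_bigr => i _; rewrite mxE mulrDl. Qed.

Lemma moment2Z a l : moment2 (a *: l) = a * moment2 l.
Proof. by rewrite mulr_sumr; apply: eq_bigr => i _; rewrite mxE mulrA. Qed.

Lemma barycenter_delta i : barycenter (delta_mx 0 i) = p i.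
Proof.
rewrite /barycenter (bigD1 i) //= mxE !eqxx scale1r big1 ?addr0 // => k ki.
by rewrite mxE (negbTE ki) andbF scale0r.
Qed.

Lemma moment2_delta i : moment2 (delta_mx 0 i) = sqnorm (p i).
Proof.
rewrite /moment2 (bigD1 i) //= mxE !eqxx mul1r big1 ?addr0 // => k ki.
by rewrite mxE (negbTE ki) andbF mul0r.
Qed.

Lemma parallel_axis l z : simplex l ->
  \sum_i l 0 i * sqnorm (p i - z) = variance l + sqnorm (barycenter l - z).
Proof.
case=> _ l1; under eq_bigr do rewrite sqnormB !mulrDr mulrN.
rewrite !big_split /= sumrN -mulr_suml l1 mul1r.
have -> : \sum_i l 0 i * (2 * dot (p i) z) = 2 * dot (barycenter l) z.
  by rewrite dot_suml mulr_sumr; apply: eq_bigr => i _; rewrite dotZl mulrCA.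
by rewrite /variance sqnormB /moment2; ring.
Qed.

Lemma variance_continuous : continuous variance.
Proof.
have lin_cont (c : 'I_m -> R) : continuous (fun l : 'rV[R]_m => \sum_i l 0 i * c i).
  apply: continuous_big => [|i _ l]; first exact: add_continuous.
  by apply: continuousM; [exact: coord_continuous | exact: cst_continuous].
have -> : variance = fun l => \sum_i l 0 i * sqnorm (p i) -
    \sum_j (\sum_i l 0 i * p i 0 j) * (\sum_i l 0 i * p i 0 j).
  apply: funext => l; congr (_ - _); apply: eq_bigr => j _.
  by rewrite summxE; under eq_bigr do rewrite mxE.
move=> l; apply: continuousB; first exact: lin_cont.
apply: continuous_big => [|j _ l']; first exact: add_continuous.
by apply: continuousM; exact: lin_cont.
Qed.

Lemma simplex_compact : compact simplex.
Proof.
have simplexE : simplex = \bigcap_i [set l : 'rV[R]_m | 0 <= l 0 i] `&`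
    (fun l : 'rV[R]_m => \sum_i l 0 i) @^-1` [set 1].
  by apply/seteqP; split => l [l0 l1]; split => // i; [move=> _; exact: l0 | exact: l0].
have sum_cont : continuous (fun l : 'rV[R]_m => \sum_i l 0 i).
  apply: continuous_big => [|i _]; [exact: add_continuous | exact: coord_continuous].
apply: (subclosed_compact _ (rV_compact (fun=> @segment_compact R 0 1))).
  rewrite simplexE; apply: closedI.
    apply: closed_bigI => i _; apply: preimage_closed (@closed_ge R 0) => l _.
    exact: coord_continuous.
  by apply: preimage_closed => [l _|]; [exact: sum_cont | exact: closed_eq].
move=> l [l0 l1] i /=; rewrite in_itv /= l0 -l1 (bigD1 i) //= lerDl.
by apply: sumr_ge0 => j _; exact: l0.
Qed.

Lemma simplex_delta i : simplex (delta_mx 0 i).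
Proof.
split=> [k|]; first by rewrite mxE ler0n.
rewrite (bigD1 i) //= mxE !eqxx big1 ?addr0 // => k ki.
by rewrite mxE (negbTE ki) andbF.
Qed.

Lemma variance_argmax_exists : (0 < m)%N ->
  exists2 l, simplex l & forall l', simplex l' -> variance l' <= variance l.
Proof.
move=> m_gt0.
have [||l] := @EVT_max_rV _ _ variance _ _ simplex_compact.
- by exists (delta_mx 0 (Ordinal m_gt0)); exact: simplex_delta.
- exact/continuous_subspaceT/variance_continuous.
- by rewrite inE => sl lmax; exists l => // l' sl'; apply: lmax; rewrite inE.
Qed.

Lemma simplex_segment {l} i {t} : simplex l -> 0 <= t <= 1 ->
  simplex ((1 - t) *: l + t *: delta_mx 0 i).
Proof.
move=> [l0 l1] /andP[t0 t1]; have [d0 d1] := simplex_delta i; split=> [k|].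
  by rewrite !mxE addr_ge0 ?mulr_ge0 ?subr_ge0 ?d0.
move: d1; under eq_bigr do rewrite mxE; move=> d1; under eq_bigr do rewrite !mxE.
by rewrite big_split /= -!mulr_sumr l1 d1 !mulr1 subrK.
Qed.

Lemma variance_segment l i t :
  variance ((1 - t) *: l + t *: delta_mx 0 i) = variance l +
    t * (sqnorm (p i - barycenter l) - variance l) - t ^+ 2 * sqnorm (p i - barycenter l).
Proof.
rewrite /variance moment2D !moment2Z moment2_delta.
rewrite barycenterD !barycenterZ barycenter_delta.
rewrite sqnormD !sqnormZ dotZl dotZr !sqnormB (dotC (p i)); ring.
Qed.

Lemma variance_argmax_enclosing {l} :
  simplex l -> (forall l', simplex l' -> variance l' <= variance l) ->
  forall i, sqnorm (p i - barycenter l) <= variance l.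
Proof.
move=> sl lmax i; set b := sqnorm (p i - barycenter l).
rewrite leNgt -subr_gt0; set a := b - variance l; apply/negP => a_gt0.
have b_ge0 : 0 <= b := sqnorm_ge0 _.
have ab_gt0 : 0 < a + b by rewrite ltr_wpDr.
set t := a / (a + b).
have t_gt0 : 0 < t by rewrite divr_gt0.
have tab : t * (a + b) = a by rewrite divfK ?gt_eqF.
(* moving weight [t] towards [p i] raises the variance by [t ^+ 2 * a > 0] *)
have t01 : 0 <= t <= 1 by rewrite ltW //= ler_pdivrMr // mul1r lerDl.
have := lmax _ (simplex_segment i sl t01); rewrite variance_segment -/b -/a.
by have := mulr_gt0 (mulr_gt0 t_gt0 t_gt0) a_gt0; nra.
Qed.

Lemma enclosing_support_sphere l : simplex l ->
  (forall i, sqnorm (p i - barycenter l) <= variance l) ->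
  forall i, l 0 i != 0 -> sqnorm (p i - barycenter l) = variance l.
Proof.
move=> sl encl i li; apply/eqP; rewrite eq_sym -subr_eq0.
have gap_ge0 k : 0 <= l 0 k * (variance l - sqnorm (p k - barycenter l)).
  by rewrite mulr_ge0 ?subr_ge0 ?sl.1.
have gap_sum : \sum_k l 0 k * (variance l - sqnorm (p k - barycenter l)) = 0.
  rewrite (eq_bigr _ (fun k _ => mulrBr _ _ _)) sumrB -mulr_suml sl.2 mul1r.
  by rewrite parallel_axis // subrr sqnorm0 addr0 subrr.
have /(_ i isT)/eqP := psumr_eq0P (fun k _ => gap_ge0 k) gap_sum.
by rewrite mulf_eq0 (negbTE li).
Qed.

(* the KKT conditions for maximising [variance] over [simplex] *)
Definition critical l := [/\ simplex l,
  forall i, sqnorm (p i - barycenter l) <= variance l &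
  forall i, l 0 i != 0 -> sqnorm (p i - barycenter l) = variance l].

Lemma variance_argmax_critical {l} : simplex l ->
  (forall l', simplex l' -> variance l' <= variance l) -> critical l.
Proof.
move=> sl lmax; have encl := variance_argmax_enclosing sl lmax.
by split=> //; exact: enclosing_support_sphere.
Qed.

Lemma affine_relation_on (S : {set 'I_m}) : (n.+1 < #|S|)%N ->
  exists2 mu : 'rV[R]_m, mu != 0 &
    [/\ forall i, i \notin S -> mu 0 i = 0, \sum_i mu 0 i = 0 & barycenter mu = 0].
Proof.
move=> nS; have /card_gt0P[i0 i0S] : (0 < #|S|)%N by rewrite (ltn_trans _ nS).
have [u u0 [u_sum u_bar]] := affine_relation (fun k => p (enum_val k)) nS.
pose mu := \row_i (if i \in S then u 0 (enum_rank_in i0S i) else 0).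
have sum_mu (V : zmodType) (F : 'I_m -> R -> V) : (forall i, F i 0 = 0) ->
    \sum_i F i (mu 0 i) = \sum_k F (enum_val k) (u 0 k).
  move=> F0; rewrite (bigID (mem S)) /= [X in _ + X]big1 ?addr0; last first.
    by move=> i /negbTE iS; rewrite mxE iS F0.
  rewrite big_enum_val; apply: eq_bigr => k _.
  by rewrite mxE enum_valP enum_valK_in.
exists mu; last split.
- apply: contraNneq u0 => mu0; apply/eqP/rowP => k.
  have := congr1 (fun v : 'rV[R]_m => v 0 (enum_val k)) mu0.
  by rewrite !mxE enum_valP enum_valK_in.
- by move=> i /negbTE iS; rewrite mxE iS.
- by rewrite (sum_mu _ (fun _ a => a)).
- by rewrite /barycenter (sum_mu _ (fun i a => a *: p i)) // => i; rewrite scale0r.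
Qed.

Definition supp l : {set 'I_m} := [set i | l 0 i != 0].

Section Perturbation.
Variables (l mu : 'rV[R]_m).
Hypotheses (l_crit : critical l) (mu_supp : forall i, l 0 i = 0 -> mu 0 i = 0).
Hypotheses (mu_sum : \sum_i mu 0 i = 0) (mu_bar : barycenter mu = 0).

(* on the support of [l] every [sqnorm (p i)] is an affine function of [p i] *)
Lemma moment2_affine_relation : moment2 mu = 0.
Proof.
have [_ _ sphere] := l_crit; set c := barycenter l.
have sqnormE i : mu 0 i * sqnorm (p i) =
    mu 0 i * variance l + 2 * dot (mu 0 i *: p i) c - mu 0 i * sqnorm c.
  have [/mu_supp->|/sphere li] := eqVneq (l 0 i) 0.
    by rewrite !mul0r scale0r dot0l; ring.
  by rewrite dotZl -li sqnormB; ring.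
rewrite /moment2 (eq_bigr _ (fun i _ => sqnormE i)) !big_split /= sumrN.
by rewrite -!mulr_suml -mulr_sumr -dot_suml -/(barycenter mu) mu_bar dot0l mu_sum; ring.
Qed.

Lemma critical_perturb t : (forall i, t * mu 0 i <= l 0 i) -> critical (l - t *: mu).
Proof.
move=> t_le; have [[_ l1] encl sphere] := l_crit.
have bar : barycenter (l - t *: mu) = barycenter l.
  by rewrite barycenterD -scaleNr barycenterZ mu_bar scaler0 addr0.
have var : variance (l - t *: mu) = variance l.
  by rewrite /variance bar moment2D -scaleNr moment2Z moment2_affine_relation mulr0 addr0.
rewrite /critical bar var; split=> //.
- split=> [i|]; first by rewrite !mxE subr_ge0.
  under eq_bigr do rewrite !mxE.
  by rewrite sumrB -mulr_sumr mu_sum mulr0 subr0.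
- move=> i; rewrite !mxE => li; apply: sphere; apply: contraNneq li => li0.
  by rewrite li0 mu_supp // mulr0 subrr.
Qed.

End Perturbation.

Lemma critical_supp_reduce {l} : critical l -> (n.+1 < #|supp l|)%N ->
  exists2 l', critical l' & (#|supp l'| < #|supp l|)%N.
Proof.
move=> l_crit nS; have [[l_ge0 _] _ _] := l_crit.
have [mu mu0 [mu_out mu_sum mu_bar]] := affine_relation_on _ nS.
have mu_supp i : l 0 i = 0 -> mu 0 i = 0.
  by move=> li; apply: mu_out; rewrite inE li eqxx.
have [k1 mu_k1] := row_sum_eq0_gt0 mu0 mu_sum.
(* the largest step keeping [l - t *: mu] nonnegative kills the weight at [k0] *)
pose k0 := [arg min_(k < k1 | 0 < mu 0 k) (l 0 k / mu 0 k)]%O.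
have [mu_k0 k0_min] : 0 < mu 0 k0 /\
    forall k, 0 < mu 0 k -> l 0 k0 / mu 0 k0 <= l 0 k / mu 0 k.
  by rewrite /k0; case: arg_minP => // j ? jmin; split=> // k; exact: jmin.
set t := l 0 k0 / mu 0 k0.
have t_ge0 : 0 <= t by rewrite divr_ge0 ?l_ge0 ?ltW.
have t_le i : t * mu 0 i <= l 0 i.
  have [mu_i|mu_i] := ltrP 0 (mu 0 i); first by rewrite -ler_pdivlMr ?k0_min.
  by apply: le_trans (l_ge0 i); exact: mulr_ge0_le0.
exists (l - t *: mu); first exact: critical_perturb l_crit mu_supp mu_sum mu_bar _ t_le.
have k0_supp : k0 \in supp l.
  by rewrite inE; apply: contraTneq mu_k0 => /mu_supp->; rewrite ltxx.
rewrite [X in (_ < X)%N](cardsD1 k0) k0_supp ltnS subset_leq_card //.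
apply/fintype.subsetP => i; rewrite !inE !mxE => li; apply/andP; split.
  by apply: contraNneq li => ->; rewrite /t divfK ?subrr // gt_eqF.
by apply: contraNneq li => li0; rewrite li0 mu_supp // mulr0 subrr.
Qed.

Lemma critical_small_supp {l} : critical l ->
  exists2 l', critical l' & (#|supp l'| <= n.+1)%N.
Proof.
elim: {l}#|supp l| {-2}l (leqnn #|supp l|) => [|k IHk] l lk l_crit.
  by exists l => //; apply: leq_trans lk _.
have [small|big] := leqP #|supp l| n.+1; first by exists l.
have [l' l'_crit l'l] := critical_supp_reduce l_crit big.
by apply: IHk l'_crit; rewrite -ltnS (leq_trans l'l).
Qed.

Lemma parallel_axis_le l z r : simplex l ->
  (forall i, sqnorm (p i - z) <= r) -> variance l + sqnorm (barycenter l - z) <= r.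
Proof.
move=> sl pz; rewrite -parallel_axis // -[r]mul1r -sl.2 mulr_suml.
by apply: ler_sum => i _; rewrite ler_wpM2l ?sl.1.
Qed.

Lemma critical_jung l D2 : critical l -> (#|supp l| <= n.+1)%N ->
  (forall i j, sqnorm (p i - p j) <= D2) -> 2 * n.+1%:R * variance l <= n%:R * D2.
Proof.
move=> [[l_ge0 l1] _ sphere] small diamD2.
(* [parallel_axis] at [p i] gives [\sum_j l 0 j * sqnorm (p i - p j) = 2 * variance l] *)
have far i : l 0 i != 0 -> 2 * variance l <= (1 - l 0 i) * D2.
  move=> li; have := parallel_axis l (p i) (conj l_ge0 l1).
  rewrite sqnormBC sphere // (bigD1 i) //= subrr sqnorm0 mulr0 add0r => e.
  rewrite mulr_natl mulr2n -e.
  rewrite -l1 [in X in _ <= X](bigD1 i) //= addrC addrK mulr_suml.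
  by apply: ler_sum => j _; rewrite ler_wpM2l.
set S := supp l; have lS : \sum_(i in S) l 0 i = 1.
  rewrite -l1 [RHS](bigID (mem S)) /= [X in _ = _ + X]big1 ?addr0 //.
  by move=> i; rewrite inE negbK => /eqP.
have [i0 i0S|noS] := pickP (fun i => i \in S); last first.
  by move: lS; rewrite big_pred0 // => /esym/eqP; rewrite oner_eq0.
have D2_ge0 : 0 <= D2 by have := diamD2 i0 i0; rewrite subrr sqnorm0.
have sum_far : \sum_(i in S) 2 * variance l <= \sum_(i in S) (1 - l 0 i) * D2.
  by apply: ler_sum => i; rewrite inE => /far.
rewrite sumr_const -mulr_suml sumrB sumr_const lS in sum_far.
rewrite -[_ *+ #|S|]mulr_natr in sum_far.
have s_gt0 : 0 < #|S|%:R :> R by rewrite ltr0n; apply/card_gt0P; exists i0.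
have s_le : #|S|%:R <= n%:R + 1 :> R by rewrite natr1 ler_nat small.
have N_ge0 : 0 <= n%:R :> R by [].
rewrite -[n.+1%:R]natr1 -(ler_pM2l s_gt0).
move: #|S|%:R (n%:R : R) (variance l) s_gt0 s_le N_ge0 sum_far => s N V s0 sN N0 sV.
apply: le_trans (_ : (N + 1) * ((s - 1) * D2) <= _).
  rewrite (_ : s * _ = (N + 1) * (2 * V * s)); last by ring.
  by rewrite ler_wpM2l //; lra.
rewrite -subr_ge0 (_ : _ - _ = (N + 1 - s) * D2); last by ring.
by rewrite mulr_ge0 // subr_ge0.
Qed.

End WeightedPoints.

Section FiniteJung.
Context {R : realType} {n : nat}.
Implicit Types (s : seq 'rV[R]_n) (c z : 'rV[R]_n) (V r : R).

(* The second clause bounds how far the centre of any enclosing ball is from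
   [c]; it is what makes the centres of growing finite samples converge. *)
Definition jung_ball s c V := [/\
  forall x, x \in s -> sqnorm (x - c) <= V,
  forall z r, (forall x, x \in s -> sqnorm (x - z) <= r) -> V + sqnorm (c - z) <= r &
  forall D2, (forall x y, x \in s -> y \in s -> sqnorm (x - y) <= D2) ->
    2 * n.+1%:R * V <= n%:R * D2].

Lemma jung_ball_exists s : s != [::] -> exists c V, jung_ball s c V.
Proof.
move=> s0; have s_gt0 : (0 < size s)%N by case: s s0.
pose p (i : 'I_(size s)) := nth 0 s i.
have p_in i : p i \in s by rewrite mem_nth.
have in_p x : x \in s -> exists i, p i = x.
  by move=> xs; exists (Ordinal (etrans (index_mem x s) xs)); rewrite /p nth_index.
have [l sl lmax] := variance_argmax_exists p s_gt0.
have [l' l_crit small] := critical_small_supp p (variance_argmax_critical p sl lmax).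
have [sl' encl _] := l_crit.
exists (barycenter p l'), (variance p l'); split.
- by move=> _ /in_p[i <-]; exact: encl.
- by move=> z r xz; apply: parallel_axis_le => // i; exact: xz (p_in i).
- by move=> D2 xyD2; apply: critical_jung => // i j; exact: xyD2 (p_in i) (p_in j).
Qed.

End FiniteJung.

Lemma Outrad_ltP {R : realType} {n : nat} (K : set 'rV[R]_n) (r : R) :
  (Outrad K < r%:E)%E -> exists z r', [/\ 0 <= r', r' < r & K `<=` cball z r'].
Proof.
by move=> /ereal_inf_lt[_ [r' [r'0 [z Kz]] <-]]; rewrite lte_fin => r'r; exists z, r'.
Qed.

Section BoundedJung.
Context {R : realType} {n : nat}.
Variables (K : set 'rV[R]_n) (x0 : 'rV[R]_n).
Hypotheses (Kx0 : K x0) (K_outrad : (Outrad K <= 1%:E)%E).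
Implicit Types (s t : seq 'rV[R]_n).

Let sample s := s != [::] /\ forall x, x \in s -> K x.

Let jung_pair s : 'rV[R]_n * R := xget (0, 0) [set cV | jung_ball s cV.1 cV.2].
Let c s := (jung_pair s).1.
Let V s := (jung_pair s).2.

Let jung_pairP {s} : sample s -> jung_ball s (c s) (V s).
Proof.
case=> s0 _; have [c' [V' cV']] := jung_ball_exists _ s0.
by have := @xgetPex _ (0, 0) [set cV | jung_ball s cV.1 cV.2] (ex_intro _ (c', V') cV').
Qed.

Let sample_x0 : sample [:: x0].
Proof. by split=> // x; rewrite inE => /eqP->. Qed.

Let sample_cat {s t} : sample s -> sample t -> sample (s ++ t).
Proof.
move=> [s0 sK] [_ tK]; split; first by case: s s0 {sK}.
by move=> x; rewrite mem_cat => /orP[/sK|/tK].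
Qed.

Let V_ge0 {s} : sample s -> 0 <= V s.
Proof.
move=> ss; have [encl _ _] := jung_pairP ss; case: s ss encl => [[]//|x s] _ encl.
by apply: le_trans (encl x _); rewrite ?sqnorm_ge0 ?mem_head.
Qed.

Let V_le1 {s} : sample s -> V s <= 1.
Proof.
move=> ss; rewrite leNgt; apply/negP => V_gt1.
have V_gt0 : 0 < V s := lt_trans ltr01 V_gt1.
have /Outrad_ltP[z [r [r0 rV Kz]]] : (Outrad K < (Num.sqrt (V s))%:E)%E.
  by apply: le_lt_trans K_outrad _; rewrite lte_fin -sqrtr1 ltr_sqrt.
have [_ minimal _] := jung_pairP ss.
have /minimal : forall x, x \in s -> sqnorm (x - z) <= r ^+ 2.
  by move=> x /ss.2/Kz; rewrite /cball /= enorm_le.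
have : r ^+ 2 < V s by rewrite -(sqr_sqrtr (ltW V_gt0)) ltr_pXn2r ?nnegrE ?sqrtr_ge0.
by have := sqnorm_ge0 (c s - z); lra.
Qed.

Let r2 := sup [set V s | s in sample].

Let r2_hasP : has_sup [set V s | s in sample].
Proof. by split; [exists (V [:: x0]), [:: x0] | exists 1 => _ [s ss <-]; exact: V_le1]. Qed.

Let V_le_r2 {s} : sample s -> V s <= r2.
Proof. by move=> ss; apply: ub_le_sup r2_hasP.2 _ (ex_intro2 _ _ s ss erefl). Qed.

Let r2_ge0 : 0 <= r2.
Proof. exact: le_trans (V_ge0 sample_x0) (V_le_r2 sample_x0). Qed.

Let center_nested {s t} : sample s -> sample t -> {subset s <= t} ->
  V s + sqnorm (c s - c t) <= V t.
Proof.
move=> ss st sub; have [_ minimal _] := jung_pairP ss; apply: minimal => x xs.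
by have [encl _ _] := jung_pairP st; apply/encl/sub.
Qed.

Let gap s := Num.sqrt (r2 - V s).

Let sqr_gap {s} : sample s -> gap s ^+ 2 = r2 - V s.
Proof. by move=> ss; rewrite sqr_sqrtr // subr_ge0 V_le_r2. Qed.

Let center_coord_nested {s t} j : sample s -> sample t -> {subset s <= t} ->
  `|c s 0 j - c t 0 j| <= gap s.
Proof.
move=> ss st sub; rewrite -ler_sqr ?nnegrE ?sqrtr_ge0 // real_normK ?num_real //.
rewrite sqr_gap //; have := sqr_coord_le_sqnorm (c s - c t) j.
rewrite !mxE => /le_trans; apply.
by have := center_nested ss st sub; have := V_le_r2 st; lra.
Qed.

Let center_coord_cross {s t} j : sample s -> sample t ->
  c s 0 j - gap s <= c t 0 j + gap t.
Proof.
move=> ss st; have sst := sample_cat ss st.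
have sub_l : {subset s <= s ++ t} by move=> x xs; rewrite mem_cat xs.
have sub_r : {subset t <= s ++ t} by move=> x xt; rewrite mem_cat xt orbT.
have := center_coord_nested j ss sst sub_l.
have := center_coord_nested j st sst sub_r.
by rewrite !ler_norml; lra.
Qed.

(* [z] is the limit of the centres [c s]: coordinatewise, every [c s 0 j]
   lies within [gap s] of it *)
Let z : 'rV[R]_n := \row_j sup [set c s 0 j - gap s | s in sample].

Let center_near_z {t} : sample t -> sqnorm (c t - z) <= n%:R * (r2 - V t).
Proof.
move=> st; rewrite -sqr_gap //; apply: sqnorm_le_coord => j; rewrite !mxE.
have ne : [set c s 0 j - gap s | s in sample] !=set0 by exists (c t 0 j - gap t), t.
have z_le : sup [set c s 0 j - gap s | s in sample] <= c t 0 j + gap t.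
  by apply: ge_sup ne _ => _ [s ss <-]; exact: center_coord_cross.
have le_z : c t 0 j - gap t <= sup [set c s 0 j - gap s | s in sample].
  apply: ub_le_sup; last by exists t.
  by exists (c t 0 j + gap t) => _ [s ss <-]; exact: center_coord_cross.
by rewrite ler_norml; lra.
Qed.

Let K_sub_ball : K `<=` cball z (Num.sqrt r2).
Proof.
move=> x Kx; apply/ler_addgt0Pr => e e_gt0; set e' := e ^+ 2 / n.+1%:R.
have e'_gt0 : 0 < e' by rewrite divr_gt0 ?exprn_gt0 ?ltr0n.
have [_ [s ss <-]] := sup_adherent e'_gt0 r2_hasP; rewrite -/r2 => Vs.
have sx : sample (x :: s) by split=> // y; rewrite inE => /predU1P[->|/ss.2].
have sub : {subset s <= x :: s} by move=> y ys; rewrite inE ys orbT.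
have x_near : enorm (x - c (x :: s)) <= Num.sqrt r2.
  rewrite enorm_le ?sqrtr_ge0 // (sqr_sqrtr r2_ge0); apply: le_trans (V_le_r2 sx).
  by have [encl _ _] := jung_pairP sx; apply: encl; exact: mem_head.
have c_near : enorm (c (x :: s) - z) <= e.
  rewrite enorm_le ?(ltW e_gt0) //; apply: le_trans (center_near_z sx) _.
  have gap_small : r2 - V (x :: s) <= e'.
    by have := center_nested ss sx sub; have := sqnorm_ge0 (c s - c (x :: s)); lra.
  rewrite -[e ^+ 2](@divfK _ n.+1%:R) ?pnatr_eq0 // -/e' mulrC.
  by rewrite ler_pM ?ler0n ?ler_nat ?subr_ge0 ?V_le_r2.
by apply: le_trans (enormB_le _ (c (x :: s)) _) _; exact: lerD.
Qed.

Lemma bounded_jung : exists z r, [/\ 0 <= r <= 1, K `<=` cball z r &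
  forall d, (forall x y, K x -> K y -> enorm (x - y) <= d) ->
    2 * n.+1%:R * r ^+ 2 <= n%:R * d ^+ 2].
Proof.
exists z, (Num.sqrt r2); split; [|exact: K_sub_ball|].
  rewrite sqrtr_ge0 -sqrtr1 ler_wsqrtr //.
  by apply: ge_sup r2_hasP.1 _ => _ [s ss <-]; exact: V_le1.
move=> d Kd; have d_ge0 : 0 <= d by have := Kd _ _ Kx0 Kx0; rewrite subrr enorm0.
have jungV s : sample s -> 2 * n.+1%:R * V s <= n%:R * d ^+ 2.
  move=> ss; have [_ _ jung] := jung_pairP ss; apply: jung => x y xs ys.
  by rewrite -enorm_le //; apply: Kd; apply: ss.2.
have cst_gt0 : 0 < 2 * n.+1%:R :> R by rewrite mulr_gt0 ?ltr0n.
rewrite (sqr_sqrtr r2_ge0) mulrC -ler_pdivlMr //.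
by apply: ge_sup r2_hasP.1 _ => _ [s ss <-]; rewrite ler_pdivlMr // mulrC jungV.
Qed.

End BoundedJung.

Arguments bounded_jung {R n K x0}.

Section CHull.
Context {R : realType} {n : nat}.
Implicit Types (A K : set 'rV[R]_n) (x y z : 'rV[R]_n).

(* The point at distance [1 - r] from [z] on the side opposite to [x] lies in
   [cdual K], and its distance to [x] is [enorm (x - z) + 1 - r]. *)
Lemma chull_sub_cball {K z r} : 0 <= r -> r <= 1 ->
  K `<=` cball z r -> chull K `<=` cball z r.
Proof.
move=> r0 r1 Kz x Kx; rewrite /cball /=; set e := enorm (x - z).
have [e0|e_neq0] := eqVneq e 0; first by rewrite e0.
have e_gt0 : 0 < e by rewrite lt_def e_neq0 enorm_ge0.
set t := (1 - r) / e.
have t_ge0 : 0 <= t by rewrite divr_ge0 ?subr_ge0 // ltW.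
have te : t * e = 1 - r by rewrite divfK.
have w_dual : cdual K (z - t *: (x - z)).
  move=> k /Kz; rewrite /cball /= => kz.
  apply: le_trans (enormB_le _ z _) _.
  by rewrite addrAC subrr add0r enormN enormZ ger0_norm // -/e te enormBC; lra.
have := Kx _ w_dual; rewrite /cball /= opprB addrCA -{2}[x - z]scale1r -scalerDl.
by rewrite enormZ ger0_norm ?addr_ge0 // -/e mulrDl mul1r te; lra.
Qed.

Lemma chull_set0 : (0 < n)%N -> chull (set0 : set 'rV[R]_n) = set0.
Proof.
move=> n_gt0; apply/seteqP; split => // x /(_ (x + 2 *: delta_mx 0 (Ordinal n_gt0))).
have e1 : enorm (delta_mx 0 (Ordinal n_gt0) : 'rV[R]_n) = 1.
  rewrite enormE /sqnorm /dot (bigD1 (Ordinal n_gt0)) //= mxE !eqxx mulr1.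
  by rewrite big1 ?addr0 ?sqrtr1 // => j /negbTE j0; rewrite mxE j0 andbF mul0r.
rewrite /cball /= opprD addrA subrr add0r enormN enormZ e1 mulr1 ger0_norm //.
by move=> /(_ (fun _ => False_ind _)); lra.
Qed.

Lemma enorm_le_diam {A x y} : A x -> A y -> ((enorm (x - y))%:E <= diam A)%E.
Proof. by move=> Ax Ay; apply: ereal_sup_ubound; exists x => //; exists y. Qed.

Lemma diam_le_cball {A z r} : A `<=` cball z r -> (diam A <= (2 * r)%:E)%E.
Proof.
move=> Az; apply: ge_ereal_sup => _ [x /Az Ax [y /Az Ay <-]]; rewrite lee_fin.
apply: le_trans (enormB_le x z y) _; rewrite (enormBC z y).
by move: Ax Ay; rewrite /cball /=; lra.
Qed.

End CHull.

Lemma diam_rV0 {R : realType} (A : set 'rV[R]_0) : (diam A <= 0%:E)%E.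
Proof.
apply: ge_ereal_sup => _ [x _ [y _ <-]].
by rewrite lee_fin /enorm big_ord0 sqrtr0.
Qed.

Lemma jung_constant {R : realType} (N r d : R) : 0 <= N -> 0 <= r -> 0 <= d ->
  2 * (N + 1) * r ^+ 2 <= N * d ^+ 2 -> 2 * r <= Num.sqrt (2 * N / (N + 1)) * d.
Proof.
move=> N0 r_ge0 d0 jung; have N1 : 0 < N + 1 by lra.
have c_ge0 : 0 <= 2 * N / (N + 1) by rewrite divr_ge0 ?mulr_ge0 // ltW.
rewrite -ler_sqr ?nnegrE ?mulr_ge0 ?sqrtr_ge0 // !exprMn sqr_sqrtr //.
by rewrite [X in _ <= X]mulrAC ler_pdivlMr //; lra.
Qed.

Theorem theorem3p7 (R : realType) (n : nat) (K : set 'rV[R]_n) :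
  (Outrad K <= 1%:E)%E ->
  (diam (chull K) <= (Num.sqrt (2 * n%:R / (n%:R + 1)))%:E * diam K)%E.
Proof.
case: n K => [|n] K K_outrad.
  by rewrite mulr0 mul0r sqrtr0 mul0e; exact: diam_rV0.
have [[x0 Kx0]|K0] := pselect (K !=set0); last first.
  have -> : K = set0 by apply/seteqP; split=> // x Kx; apply: K0; exists x.
  by rewrite chull_set0 //; apply: ge_ereal_sup => _ [x []].
have [z [r [/andP[r0 r1] Kz jung]]] := bounded_jung Kx0 K_outrad.
have diam_ge0 : (0%:E <= diam K)%E.
  by have := enorm_le_diam Kx0 Kx0; rewrite subrr enorm0.
have diamE : diam K = (fine (diam K))%:E.
  by rewrite fineK // ge0_fin_numE // (le_lt_trans (diam_le_cball Kz)) ?ltry.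
set d := fine (diam K) in diamE.
have Kd x y : K x -> K y -> enorm (x - y) <= d.
  by move=> Kx Ky; rewrite -lee_fin -diamE; exact: enorm_le_diam.
have d0 : 0 <= d by rewrite -lee_fin -diamE.
rewrite diamE -EFinM; apply: le_trans (diam_le_cball (chull_sub_cball r0 r1 Kz)) _.
by rewrite lee_fin jung_constant // natr1 jung.
Qed.
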